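(* Let $V$ be a complex Banach space, $H$ a commutative monoid generated by $\varpi_1,\dots,\varpi_n$, and $h\mapsto T_h$ a monoid homomorphism into the bounded operators on $V$ with $T_e=\mathrm{id}_V$; put $T_j=T_{\varpi_j}$. Let $\chi$ be a character of $\mathbb C[X_1,\dots,X_n]$, $\lambda_i=\chi(X_i)$, and suppose there is $h\in H^\circ$ with a representation $h=\sum_i\ell_i\varpi_i$ ($\ell_i\in\mathbb N_0$) such that $|\prod_i\lambda_i^{\ell_i}|>r_{\mathrm{ess}}(T_h)$. Then $\chi$ is a Fredholm character, i.e. $\dim_{\mathbb C}\mathrm{Tor}_i^{\mathbb C[X]}(\mathbb C_\chi,V_T)<\infty$ for all $i$ and $=0$ for all but finitely many $i$.
   Context: $H^\circ=\{h\in H:T_h$ quasi-compact$\}$; $T$ is quasi-compact if $r_{\mathrm{ess}}(T)<r(T)$ (spectral radius), where $r_{\mathrm{ess}}(T)=\inf\{r>0:\lambda-T$ Fredholm of index zero for all $|\lambda|\ge r\}$. $V_T$ is $V$ as a $\mathbb C[X]$-module with $X_j$ acting by $T_j$; $\mathrm{Tor}_p^{\mathbb C[X]}(\mathbb C_\chi,V_T)$ is the $p$-th homology of the Koszul complex $\Lambda^p\mathbb C^n\otimes V\to\Lambda^{p-1}\mathbb C^n\otimes V$, $e_{i_1}\wedge\dots\wedge e_{i_p}\otimes x\mapsto\sum_k(-1)^ke_{i_1}\wedge\cdots\widehat{e_{i_k}}\cdots\wedge e_{i_p}\otimes(T_{i_k}-\lambda_{i_k})x$. *)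

From HB Require Import structures.
From mathcomp Require Import all_boot all_order all_algebra.
From mathcomp Require Export mpoly.
From mathcomp Require Import all_classical all_reals all_analysis.
From mathcomp Require Export complex.
From mathcomp Require Export all_boot all_order all_algebra all_classical all_reals all_analysis.

Set Implicit Arguments.
Unset Strict Implicit.
Unset Printing Implicit Defensive.

Import Order.TTheory GRing.Theory Num.Theory.
Import numFieldNormedType.Exports.
Local Open Scope ring_scope.
Local Open Scope classical_set_scope.

Definition cmod (R : realType) (z : R[i]) : R := complex.Re `|z|.

(* [fin_span_mod U B m]: there are m vectors w_1..w_m such that every   *)
(* u in U lies in B + span(w_1..w_m).  With B = {0} (resp. U = W) this  *)
(* says dim U <= m (resp. codim B <= m).                                *)
Definition fin_span_mod (K : pzRingType) (W : lmodType K)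
  (U B : set W) (m : nat) : Prop :=
  exists w : 'I_m -> W, forall u, U u ->
    exists (c : 'I_m -> K) (b : W), B b /\ u = b + \sum_(i < m) c i *: w i.

(* dim (U + B)/B = m (U, B subsets; used with B a subspace of U). *)
Definition has_dim_mod (K : pzRingType) (W : lmodType K)
  (U B : set W) (m : nat) : Prop :=
  fin_span_mod U B m /\ forall k, (k < m)%N -> ~ fin_span_mod U B k.

Definition fin_dim_mod (K : pzRingType) (W : lmodType K) (U B : set W) : Prop :=
  exists m, fin_span_mod U B m.

Definition bounded_op (R : realType) (V : completeNormedModType R[i])
  (A : V -> V) : Prop := linear A /\ continuous A.

Definition kerS (R : realType) (V : completeNormedModType R[i]) (A : V -> V)
  : set V := [set x | A x = 0].

Definition rangeS (R : realType) (V : completeNormedModType R[i]) (A : V -> V)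
  : set V := [set A x | x in setT].

Definition fredholm_index0 (R : realType) (V : completeNormedModType R[i])
  (A : V -> V) : Prop :=
  exists m, has_dim_mod (kerS A) [set 0] m /\ has_dim_mod setT (rangeS A) m.

Definition bop_invertible (R : realType) (V : completeNormedModType R[i])
  (A : V -> V) : Prop :=
  exists S : V -> V, bounded_op S /\ (forall x, S (A x) = x) /\ (forall x, A (S x) = x).

Definition spectrum (R : realType) (V : completeNormedModType R[i])
  (A : V -> V) : set R[i] :=
  [set z | ~ bop_invertible (fun x => z *: x - A x)].

Definition spec_radius (R : realType) (V : completeNormedModType R[i])
  (A : V -> V) : \bar R :=
  ereal_sup [set (cmod z)%:E | z in spectrum A].

Definition ess_spec_radius (R : realType) (V : completeNormedModType R[i])
  (A : V -> V) : \bar R :=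
  ereal_inf [set r%:E | r in [set r : R | 0 < r /\
     forall z : R[i], r <= cmod z -> fredholm_index0 (fun x => z *: x - A x)]].

Definition quasi_compact (R : realType) (V : completeNormedModType R[i])
  (A : V -> V) : Prop := (ess_spec_radius A < spec_radius A)%E.

(* Lambda^p C^n (x) V is identified with the V-valued functions on the  *)
(* p-element subsets of {0..n-1} (x S = coefficient of e_S).            *)
Definition koszul_chains (R : realType) (V : completeNormedModType R[i])
  (n p : nat) : set ({set 'I_n} -> V) :=
  [set x | forall S : {set 'I_n}, #|S| != p -> x S = 0].

(* d(e_{i_1}/\.../\e_{i_p} (x) x)
     = sum_k (-1)^k e_{i_1}/\..^(i_k)../\e_{i_p} (x) (T_{i_k} - lambda_{i_k}) x,
   with i_1 < ... < i_p and k counted from 1. *)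
Definition koszul_d (R : realType) (V : completeNormedModType R[i]) (n : nat)
  (Tj : 'I_n -> V -> V) (lam : 'I_n -> R[i])
  (x : {set 'I_n} -> V) : {set 'I_n} -> V :=
  fun S => \sum_(k < n | k \notin S)
     ((-1) ^+ (#|[set j in S | (val j < val k)%N]|.+1)) *:
       (Tj k (x (k |: S)) - lam k *: x (k |: S)).

Definition koszul_cycles (R : realType) (V : completeNormedModType R[i]) (n : nat)
  (Tj : 'I_n -> V -> V) (lam : 'I_n -> R[i]) (p : nat) : set ({set 'I_n} -> V) :=
  [set x | @koszul_chains R V n p x /\ koszul_d Tj lam x = (fun=> 0)].

Definition koszul_boundaries (R : realType) (V : completeNormedModType R[i]) (n : nat)
  (Tj : 'I_n -> V -> V) (lam : 'I_n -> R[i]) (p : nat) : set ({set 'I_n} -> V) :=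
  [set koszul_d Tj lam y | y in @koszul_chains R V n p.+1].

(* chi (with lambda_i = chi(X_i)) is a Fredholm character: every
   Tor_p = H_p(Koszul) is finite-dimensional, and zero for p large. *)
Definition fredholm_character (R : realType) (V : completeNormedModType R[i])
  (n : nat) (Tj : 'I_n -> V -> V) (lam : 'I_n -> R[i]) : Prop :=
  (forall p, fin_dim_mod (koszul_cycles Tj lam p) (koszul_boundaries Tj lam p)) /\
  (exists N, forall p, (N <= p)%N ->
     koszul_cycles Tj lam p `<=` koszul_boundaries Tj lam p).

(* Let mu = prod_j lambda_j ^ l_j.  Since |mu| > r_ess(T_h), the operator
   f = mu - T_h is Fredholm: finite-dimensional kernel and cokernel.
   Telescoping along h = sum_j l_j varpi_j writes T_h - mu as a combination
   of the T_j - lambda_j with coefficients commuting with all T_k, and each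
   T_j - lambda_j is null-homotopic on the Koszul complex (the homotopy is
   wedging with e_j).  Hence f, applied coordinatewise, commutes with the
   differential and sends cycles to boundaries; together with the finiteness
   of its kernel and cokernel this forces every Koszul homology group to be
   finite-dimensional.  Above degree n there are no chains at all. *)

From HB Require Import structures.
From mathcomp Require Import zify.
Import Order.TTheory GRing.Theory Num.Theory.
Local Open Scope ring_scope.
Local Open Scope classical_set_scope.

Set Implicit Arguments.
Unset Strict Implicit.
Unset Printing Implicit Defensive.

Section Span.
Variables (K : fieldType) (W : lmodType K).

Fixpoint in_span (s : seq W) (v : W) : Prop :=
  if s is w :: s' then exists a, in_span s' (v - a *: w) else v = 0.

Lemma in_spanD s u v : in_span s u -> in_span s v -> in_span s (u + v).
Proof.
elim: s u v => [|w s IH] u v /=; first by move=> -> ->; rewrite addr0.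
by move=> [a Ha] [b Hb]; exists (a + b); rewrite scalerDl opprD addrACA; apply: IH.
Qed.

Lemma in_spanZ s c v : in_span s v -> in_span s (c *: v).
Proof.
elim: s v => [|w s IH] v /=; first by move=> ->; rewrite scaler0.
by move=> [a Ha]; exists (c * a); rewrite -scalerA -scalerBr; apply: IH.
Qed.

Lemma in_spanB s u v : in_span s u -> in_span s v -> in_span s (u - v).
Proof. by move=> Hu /(in_spanZ (-1)); rewrite scaleN1r; apply: in_spanD. Qed.

Lemma in_span_cat s1 s2 u v :
  in_span s1 u -> in_span s2 v -> in_span (s1 ++ s2) (u + v).
Proof.
elim: s1 u => [|w s1 IH] u /=; first by move=> ->; rewrite add0r.
by move=> [a Ha] Hv; exists a; rewrite addrAC; apply: IH.
Qed.

Lemma in_span_flatten I (r : seq I) (s : I -> seq W) (v : I -> W) :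
  (forall i, in_span (s i) (v i)) ->
  in_span (flatten [seq s i | i <- r]) (\sum_(i <- r) v i).
Proof.
move=> Hv; elim: r => [|i r IH]; first by rewrite big_nil.
by rewrite big_cons; apply: in_span_cat.
Qed.

Lemma in_span_lincomb I (r : seq I) (w : I -> W) (c : I -> K) :
  in_span [seq w i | i <- r] (\sum_(i <- r) c i *: w i).
Proof.
elim: r => [|i r IH]; first by rewrite big_nil.
by exists (c i); rewrite big_cons addrC addKr.
Qed.

Lemma in_span_coefs s v :
  in_span s v -> exists c : 'I_(size s) -> K, v = \sum_(i < size s) c i *: s`_i.
Proof.
elim: s v => [|w s IH] v /=; first by move=> ->; exists (fun=> 0); rewrite big_ord0.
move=> [a /IH [c Hc]]; exists (fun i => if unlift ord0 i is Some j then c j else a).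
rewrite big_ord_recl /= unlift_none.
under eq_bigr => j _ do rewrite liftK.
by rewrite -Hc addrC subrK.
Qed.

Lemma fin_span_mod_in_span (U B : set W) s :
  (forall u, U u -> exists2 b, B b & in_span s (u - b)) ->
  fin_span_mod U B (size s).
Proof.
move=> HU; exists (nth 0 s) => u /HU [b Bb /in_span_coefs [c Hc]].
by exists c, b; split; rewrite // -Hc addrC subrK.
Qed.

End Span.

Lemma in_span_linear (K : fieldType) (W W' : lmodType K) (g : {linear W -> W'})
    (s : seq W) (v : W) :
  in_span s v -> in_span [seq g w | w <- s] (g v).
Proof.
elim: s v => [|w s IH] v /=; first by move=> ->; rewrite linear0.
by move=> [a /IH Ha]; exists a; rewrite -linearZ -linearB.
Qed.

Section Fredholm.
Variables (K : fieldType) (W : lmodType K).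

(* Induction on s: if f x0 = w modulo span s for some x0, then x0 joins r;
   otherwise w occurs with coefficient 0 in every f x lying in span (w :: s). *)
Lemma in_span_preimage (f : {linear W -> W}) s : exists r, forall x,
  in_span s (f x) -> exists2 k, f k = 0 & in_span r (x - k).
Proof.
elim: s => [|w s [r IH]].
  by exists [::] => x /= fx; exists x; rewrite ?subrr.
have [[x0 Hx0]|Hno] := pselect (exists x0, in_span s (f x0 - w)).
  exists (x0 :: r) => x /= [a Ha].
  have : in_span s (f (x - a *: x0)).
    have -> : f (x - a *: x0) = (f x - a *: w) - a *: (f x0 - w).
      by rewrite linearB linearZ scalerBr opprB addrA subrK.
    by apply: in_spanB => //; apply: in_spanZ.
  by move=> /IH [k fk Hk]; exists k => //; exists a; rewrite addrAC.
exists r => x /= [a Ha]; have [a0|an0] := eqVneq a 0.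
  by apply: IH; rewrite a0 scale0r subr0 in Ha.
exfalso; apply: Hno; exists (a^-1 *: x).
by rewrite linearZ -[w](scalerK an0) -scalerBr; apply: in_spanZ.
Qed.

(* If F z = D y and y = q + F y' with q in span qs, then F (z - D y') = D q
   lies in a fixed finite-dimensional space, so z - D y' lies in ker F plus
   the finite-dimensional space given by in_span_preimage. *)
Lemma fin_dim_mod_fredholm (F D : {linear W -> W}) (Z B : set W) ks qs :
  (forall x, F x = 0 -> in_span ks x) ->
  (forall x, exists y, in_span qs (x - F y)) ->
  (forall x, F (D x) = D (F x)) ->
  (forall y, B (D y)) ->
  (forall z, Z z -> exists y, F z = D y) ->
  fin_dim_mod Z B.
Proof.
move=> Hker Hcoker FD BD FZ.
have [r Hr] := in_span_preimage F [seq D q | q <- qs].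
exists (size (ks ++ r)); apply: fin_span_mod_in_span => z /FZ [y Fz].
have [y' Hy'] := Hcoker y.
have [k Fk Hk] : exists2 k, F k = 0 & in_span r (z - D y' - k).
  apply: Hr; rewrite linearB FD Fz -linearB.
  exact: in_span_linear.
exists (D y') => //; rewrite -(subrK k (z - D y')) addrC.
exact: in_span_cat (Hker _ Fk) Hk.
Qed.

End Fredholm.

Section Pointwise.
Variables (K : fieldType) (I : finType) (V : lmodType K).

Definition single (i : I) (v : V) : I -> V := fun j => if j == i then v else 0.

Lemma single_is_linear i : linear (single i).
Proof.
move=> a u v; apply: funext => j; rewrite !fctE /single.
by case: (j == i); rewrite ?scaler0 ?addr0.
Qed.

HB.instance Definition _ i :=
  GRing.isLinear.Build K V (I -> V) _ (single i) (single_is_linear i).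

Definition postcomp (f : {linear V -> V}) (x : I -> V) : I -> V := f \o x.

Lemma postcomp_is_linear f : linear (postcomp f).
Proof. by move=> a x y; apply: funext => i /=; rewrite /postcomp !fctE /= linearP. Qed.

HB.instance Definition _ f :=
  GRing.isLinear.Build K (I -> V) (I -> V) _ (postcomp f) (postcomp_is_linear f).

Lemma sum_single (x : I -> V) : x = \sum_i single i (x i).
Proof.
apply: funext => j; rewrite fct_sumE (bigD1 j) //= big1 ?addr0 /single ?eqxx //.
by move=> i; rewrite eq_sym => /negbTE ->.
Qed.

Definition single_span (s : seq V) : seq (I -> V) :=
  flatten [seq [seq single i w | w <- s] | i <- index_enum I].

Lemma in_single_span s (x : I -> V) :
  (forall i, in_span s (x i)) -> in_span (single_span s) x.
Proof.
move=> Hx; rewrite [x]sum_single; apply: in_span_flatten => i.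
exact: in_span_linear.
Qed.

Lemma postcomp_kernel (f : {linear V -> V}) ks (x : I -> V) :
  (forall v, f v = 0 -> in_span ks v) ->
  postcomp f x = 0 -> in_span (single_span ks) x.
Proof.
by move=> Hker Hx; apply: in_single_span => i; apply: Hker; have /= := congr1 (@^~ i) Hx.
Qed.

Lemma postcomp_cokernel (f : {linear V -> V}) qs (x : I -> V) :
  (forall v, exists u, in_span qs (v - f u)) ->
  exists y, in_span (single_span qs) (x - postcomp f y).
Proof.
move=> Hcoker; have [y Hy] := choice (fun i => Hcoker (x i)).
by exists y; apply: in_single_span.
Qed.

End Pointwise.
Arguments single_span {K I V}.

Lemma signr_mul_self (Rg : pzRingType) (m : nat) : (-1) ^+ m * (-1) ^+ m = 1 :> Rg.
Proof. by rewrite -exprD addnn -mul2n exprM sqrrN !expr1n. Qed.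

Section Koszul.
Variables (R : realType) (V : completeNormedModType R[i]) (n : nat).
Variables (Tj : 'I_n -> {linear V -> V}) (lam : 'I_n -> R[i]).

Local Notation W := ({set 'I_n} -> V).
Local Notation d := (koszul_d (fun k => Tj k) lam).
Local Notation chains := (@koszul_chains R V n).
Local Notation cycles := (koszul_cycles (fun k => Tj k) lam).
Local Notation boundaries := (koszul_boundaries (fun k => Tj k) lam).

Definition nbelow (S : {set 'I_n}) (k : 'I_n) := #|[set j in S | (val j < val k)%N]|.

Definition koszul_op k : {linear V -> V} := Tj k \- lam k \*: idfun.

Lemma koszul_dE x S : d x S =
  \sum_(k < n | k \notin S) (-1) ^+ (nbelow S k).+1 *: koszul_op k (x (k |: S)).
Proof. by []. Qed.

Lemma koszul_d_is_linear : linear d.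
Proof.
move=> a x y; apply: funext => S; rewrite -[RHS]/(a *: d x S + d y S).
rewrite !koszul_dE scaler_sumr -big_split; apply: eq_bigr => k _.
by rewrite -[(a *: x + y) _]/(a *: x _ + y _) linearP scalerDr !scalerA mulrC.
Qed.

HB.instance Definition _ :=
  GRing.isLinear.Build _ _ _ _ d koszul_d_is_linear.

Lemma nbelowU1 (S : {set 'I_n}) (i k : 'I_n) : i \notin S ->
  nbelow (i |: S) k = (nbelow S k + (val i < val k))%N.
Proof.
move=> iS; rewrite /nbelow; case: ltnP => ik.
  have -> : [set j in i |: S | (val j < val k)%N] = i |: [set j in S | (val j < val k)%N].
    by apply/setP => j; rewrite !inE; case: eqVneq => [->|].
  by rewrite cardsU1 inE (negbTE iS) addnC.
have -> : [set j in i |: S | (val j < val k)%N] = [set j in S | (val j < val k)%N].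
  apply/setP => j; rewrite !inE; case: eqVneq => [->|] //=.
  by rewrite (negbTE iS) ltnNge ik.
by rewrite addn0.
Qed.

(* The two ways of passing from S to k |: (S :\ i), through d (koszul_wedge i _)
   and through koszul_wedge i (d _), carry opposite signs. *)
Lemma koszul_sign_swap (Rg : pzRingType) (S : {set 'I_n}) (i k : 'I_n) :
  i \in S -> k \notin S ->
  (-1) ^+ (nbelow S k).+1 * (-1) ^+ (nbelow (k |: S) i).+1 =
  - ((-1) ^+ (nbelow S i).+1 * (-1) ^+ (nbelow (S :\ i) k).+1) :> Rg.
Proof.
move=> iS kS; have ki : k != i by apply: contraNneq kS => ->.
have e1 : nbelow S k = (nbelow (S :\ i) k + (val i < val k))%N.
  by rewrite -nbelowU1 ?finset.setD1K // !inE eqxx.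
have e2 : nbelow (k |: S) i = (nbelow S i + (val k < val i))%N by rewrite nbelowU1.
have e3 : ((val i < val k) + (val k < val i) = 1)%N.
  by move: ki; rewrite -val_eqE /=; case: ltngtP.
by rewrite -!exprD -[RHS]mulN1r -exprS e1 e2; congr (_ ^+ _); lia.
Qed.

(* Minus the exterior product with e_i: e_i /\ e_(S :\ i) = (-1) ^+ nbelow S i *: e_S.
   The extra sign makes koszul_homotopy hold with a plus sign. *)
Definition koszul_wedge (i : 'I_n) (z : W) : W := fun S =>
  if i \in S then (-1) ^+ (nbelow S i).+1 *: z (S :\ i) else 0.

Lemma koszul_homotopy i z :
  d (koszul_wedge i z) + koszul_wedge i (d z) = postcomp (koszul_op i) z.
Proof.
apply: funext => S; rewrite -[LHS]/(d (koszul_wedge i z) S + koszul_wedge i (d z) S).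
rewrite -[RHS]/(koszul_op i (z S)) koszul_dE {2}/koszul_wedge; case: ifPn => iS.
  set S' := S :\ i; have iS' : i \notin S' by rewrite !inE eqxx.
  have SE : S = i |: S' by rewrite finset.setD1K.
  have cancel : \sum_(k < n | k \notin S) (-1) ^+ (nbelow S k).+1 *:
      koszul_op k (koszul_wedge i z (k |: S)) + (-1) ^+ (nbelow S i).+1 *:
      \sum_(k < n | (k \notin S') && (k != i)) (-1) ^+ (nbelow S' k).+1 *:
      koszul_op k (z (k |: S')) = 0.
    have idx k : (k \notin S') && (k != i) = (k \notin S).
      by rewrite SE !inE negb_or andbC.
    apply/eqP; rewrite addr_eq0 scaler_sumr -sumrN (eq_bigl _ _ idx).
    apply/eqP/eq_bigr => k kS.
    have ki : k != i by apply: contraNneq kS => ->.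
    rewrite /koszul_wedge in_setU1 iS orbT.
    have -> : (k |: S) :\ i = k |: S'.
      apply/setP => j; rewrite !inE; case: eqVneq => [->|] //=.
      by rewrite eq_sym (negbTE ki).
    by rewrite linearZZ !scalerA -scaleNr koszul_sign_swap.
  have eS : nbelow S i = nbelow S' i by rewrite SE nbelowU1 // ltnn addn0.
  rewrite koszul_dE (bigD1 i iS') scalerDr addrCA cancel addr0 -SE.
  by rewrite scalerA eS signr_mul_self scale1r.
rewrite addr0 (bigD1 i iS) big1 ?addr0 => [|k /andP[_ ki]].
  rewrite /koszul_wedge setU11 setU1K // nbelowU1 // ltnn addn0.
  by rewrite linearZZ scalerA signr_mul_self scale1r; apply: addr0.
by rewrite /koszul_wedge !inE eq_sym (negbTE ki) (negbTE iS) linear0 scaler0.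
Qed.

Definition chain_proj (p : nat) (x : W) : W := fun S => if #|S| == p then x S else 0.

Lemma chain_proj_is_linear p : linear (chain_proj p).
Proof.
move=> a x y; apply: funext => S.
rewrite -[RHS]/(a *: chain_proj p x S + chain_proj p y S) /chain_proj.
by case: (#|S| == p); rewrite ?scaler0 ?addr0.
Qed.

HB.instance Definition _ p :=
  GRing.isLinear.Build _ _ _ _ (chain_proj p) (chain_proj_is_linear p).

Lemma chain_proj_chains p x : chains p (chain_proj p x).
Proof. by move=> S /negbTE Sp; rewrite /chain_proj Sp. Qed.

Lemma chain_projK p x : chains p x -> chain_proj p x = x.
Proof. by move=> px; apply: funext => S; rewrite /chain_proj; case: eqP => // /eqP /px. Qed.

Lemma koszul_boundariesP p b :
  boundaries p b <-> exists y, b = d (chain_proj p.+1 y).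
Proof.
split=> [[y py <-]|[y ->]]; first by exists y; rewrite chain_projK.
by exists (chain_proj p.+1 y); first exact: chain_proj_chains.
Qed.

Lemma koszul_wedge_chains p i z : chains p z -> chains p.+1 (koszul_wedge i z).
Proof.
move=> pz S Sp; rewrite /koszul_wedge; case: ifP => // iS.
apply/eqP; rewrite scaler_eq0; apply/orP; right; apply/eqP/pz.
by rewrite (cardsD1 i S) iS in Sp.
Qed.

Lemma postcomp_koszul_d (f : {linear V -> V}) :
  (forall k v, f (Tj k v) = Tj k (f v)) ->
  forall x, postcomp f (d x) = d (postcomp f x).
Proof.
move=> fT x; apply: funext => S; rewrite /postcomp /= !koszul_dE linear_sum.
by apply: eq_bigr => k _; rewrite linearZZ /= linearB linearZZ fT.
Qed.

Lemma postcomp_chain_proj (f : {linear V -> V}) p x :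
  postcomp f (chain_proj p x) = chain_proj p (postcomp f x).
Proof.
by apply: funext => S; rewrite /postcomp /chain_proj /=; case: (#|S| == p); rewrite ?linear0.
Qed.

Definition kills_homology (p : nat) (g : V -> V) :=
  forall z, cycles p z -> boundaries p (g \o z).

Lemma kills_homology_koszul_op p k : kills_homology p (koszul_op k).
Proof.
move=> z [pz dz]; exists (koszul_wedge k z); first exact: koszul_wedge_chains.
have wedge0 : koszul_wedge k (fun=> 0) = 0.
  by apply: funext => S; rewrite /koszul_wedge /= scaler0 if_same.
by have := koszul_homotopy k z; rewrite dz wedge0 addr0.
Qed.

Lemma kills_homology0 p : kills_homology p (fun=> 0).
Proof. by move=> z _; apply/koszul_boundariesP; exists 0; rewrite !linear0. Qed.

Lemma kills_homologyD p g1 g2 : kills_homology p g1 -> kills_homology p g2 ->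
  kills_homology p (fun v => g1 v + g2 v).
Proof.
move=> k1 k2 z cz; have /koszul_boundariesP [y1 e1] := k1 z cz.
have /koszul_boundariesP [y2 e2] := k2 z cz.
apply/koszul_boundariesP; exists (y1 + y2).
by rewrite -[LHS]/((g1 \o z) + (g2 \o z)) e1 e2 !linearD.
Qed.

Lemma kills_homologyZ p a g : kills_homology p g ->
  kills_homology p (fun v => a *: g v).
Proof.
move=> kg z cz; have /koszul_boundariesP [y e] := kg z cz.
apply/koszul_boundariesP; exists (a *: y).
by rewrite -[LHS]/(a *: (g \o z)) e !linearZZ.
Qed.

Lemma kills_homology_comp p (h : {linear V -> V}) g :
  (forall k v, h (Tj k v) = Tj k (h v)) ->
  kills_homology p g -> kills_homology p (h \o g).
Proof.
move=> hT kg z cz; have /koszul_boundariesP [y e] := kg z cz.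
apply/koszul_boundariesP; exists (postcomp h y).
by rewrite -postcomp_chain_proj -postcomp_koszul_d // -e.
Qed.

Lemma koszul_cycles_vanish p : (n < p)%N -> cycles p `<=` boundaries p.
Proof.
move=> np z [pz _]; have -> : z = 0.
  apply: funext => S; apply: pz; apply: contraTneq np => <-.
  by rewrite -leqNgt (leq_trans (max_card _)) ?card_ord.
by apply/koszul_boundariesP; exists 0; rewrite !linear0.
Qed.

Lemma koszul_homology_fin_dim (f : {linear V -> V}) ks qs p :
  (forall k v, f (Tj k v) = Tj k (f v)) ->
  (forall v, f v = 0 -> in_span ks v) ->
  (forall v, exists u, in_span qs (v - f u)) ->
  kills_homology p f ->
  fin_dim_mod (cycles p) (boundaries p).
Proof.
move=> fT fker fcoker kf.
apply: (@fin_dim_mod_fredholm _ _ (postcomp f) (d \o chain_proj p.+1) _ _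
  (single_span ks) (single_span qs)).
- by move=> x; apply: postcomp_kernel.
- by move=> x; apply: postcomp_cokernel.
- by move=> x; rewrite /= postcomp_koszul_d // postcomp_chain_proj.
- by move=> y; apply/koszul_boundariesP; exists y.
- by move=> z /kf /koszul_boundariesP.
Qed.

End Koszul.

Section MonoidAction.
Variables (R : realType) (V : completeNormedModType R[i]) (H : nmodType) (n : nat).
Variables (varpi : 'I_n -> H) (T : H -> {linear V -> V}) (lam : 'I_n -> R[i]).
Hypotheses (T0 : T 0 = id :> (V -> V)) (TD : forall a b, T (a + b) = T a \o T b :> (V -> V)).

Local Notation kills_homology := (kills_homology (fun j => T (varpi j)) lam).

Lemma T_comm a b v : T a (T b v) = T b (T a v).
Proof. by rewrite -[LHS]/((T a \o T b) v) -TD addrC TD. Qed.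

Lemma T_comm_scale_sub a b mu v :
  mu *: T a v - T b (T a v) = T a (mu *: v - T b v).
Proof. by rewrite linearB linearZZ T_comm. Qed.

Lemma kills_homology_step p j h mu :
  kills_homology p (fun v => T h v - mu *: v) ->
  kills_homology p (fun v => T (varpi j + h) v - (lam j * mu) *: v).
Proof.
move=> kh.
have -> : (fun v => T (varpi j + h) v - (lam j * mu) *: v) =
    (fun v => (T (varpi j) \o (fun v => T h v - mu *: v)) v +
              mu *: koszul_op (fun i => T (varpi i)) lam j v).
  apply: funext => v; rewrite TD /=.
  by rewrite [in RHS]linearB [in RHS]linearZZ scalerBr scalerA [mu * _]mulrC addrA subrK.
apply: kills_homologyD; last exact/kills_homologyZ/kills_homology_koszul_op.
by apply: kills_homology_comp => // k v; apply: T_comm.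
Qed.

Lemma kills_homology_monomial p (l : 'I_n -> nat) (r : seq 'I_n) :
  kills_homology p (fun v =>
    T (\sum_(j <- r) varpi j *+ l j) v - (\prod_(j <- r) lam j ^+ l j) *: v).
Proof.
elim: r => [|j r IH].
  rewrite !big_nil (_ : (fun v => _) = fun=> 0); first exact: kills_homology0.
  by apply: funext => v; rewrite T0 scale1r subrr.
rewrite !big_cons; elim: (l j) => [|m IHm]; first by rewrite mulr0n add0r expr0 mul1r.
by rewrite mulrS -addrA exprS -mulrA; apply: kills_homology_step.
Qed.

Lemma kills_homology_scale_sub p h (l : 'I_n -> nat) :
  h = \sum_(j < n) varpi j *+ l j ->
  kills_homology p (fun v => (\prod_(j < n) lam j ^+ l j) *: v - T h v).
Proof.
move=> ->; have := kills_homologyZ (-1) (kills_homology_monomial (p := p) l (index_enum 'I_n)).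
by congr kills_homology; apply: funext => v; rewrite scaleN1r opprB.
Qed.

End MonoidAction.

Section FredholmOperators.
Variables (R : realType) (V : completeNormedModType R[i]).

Lemma ess_spec_radius_lt_fredholm (A : V -> V) (mu : R[i]) :
  (ess_spec_radius A < (cmod mu)%:E)%E -> fredholm_index0 (fun x => mu *: x - A x).
Proof.
by move=> /ereal_inf_lt [_ [r [_ Ar] <-]]; rewrite lte_fin => /ltW /Ar.
Qed.

Lemma fredholm_index0_in_span (A : V -> V) : fredholm_index0 A ->
  exists ks qs, (forall v, A v = 0 -> in_span ks v) /\
                (forall v, exists u, in_span qs (v - A u)).
Proof.
move=> [m [[[w Hker] _] [[w' Hcoker] _]]].
exists [seq w i | i <- index_enum 'I_m], [seq w' i | i <- index_enum 'I_m]; split.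
  by move=> v /Hker [c [_ [-> ->]]]; rewrite add0r; apply: in_span_lincomb.
move=> v; have [c [_ [[u _ <-] ->]]] := Hcoker v I.
by exists u; rewrite addrC addKr; apply: in_span_lincomb.
Qed.

End FredholmOperators.

Theorem mainTheorem12 (R : realType) (V : completeNormedModType R[i])
  (H : nmodType) (n : nat) (varpi : 'I_n -> H) (T : H -> V -> V)
  (chi : {rmorphism {mpoly R[i][n]} -> R[i]}) :
  (forall h : H, exists l : 'I_n -> nat, h = \sum_(j < n) varpi j *+ l j) ->
  (forall h : H, bounded_op (T h)) ->
  T 0 = id ->
  (forall a b : H, T (a + b) = T a \o T b) ->
  (exists h : H, quasi_compact (T h) /\
     exists l : 'I_n -> nat, h = \sum_(j < n) varpi j *+ l j /\
       (ess_spec_radius (T h) < (cmod (\prod_(j < n) chi 'X_j ^+ l j))%:E)%E) ->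
  fredholm_character (fun j => T (varpi j)) (fun j => chi 'X_j).
Proof.
move=> _ Tbounded T0 TD [h [_ [l [hl ess_lt]]]].
pose TL a : {linear V -> V} :=
  HB.pack (T a) (GRing.isLinear.Build _ _ _ _ (T a) (Tbounded a).1).
set mu := \prod_(j < n) chi 'X_j ^+ l j in ess_lt.
pose f : {linear V -> V} := mu \*: idfun \- TL h.
have [ks [qs [fker fcoker]]] :=
  fredholm_index0_in_span (ess_spec_radius_lt_fredholm ess_lt).
have fT k v : f (TL (varpi k) v) = TL (varpi k) (f v).
  exact: (T_comm_scale_sub (T := TL) TD).
have kf p : kills_homology (fun j => TL (varpi j)) (fun j => chi 'X_j) p f.
  exact: (kills_homology_scale_sub (T := TL) (p := p) T0 TD hl).
split=> [p|]; first exact: koszul_homology_fin_dim fT fker fcoker (kf p).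
by exists n.+1 => p; apply: (koszul_cycles_vanish (Tj := fun j => TL (varpi j))).
Qed.
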